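(* Let $f \colon \mathbb{R} \to \mathbb{R}$ be given by $f(x) = \ln\big(\frac{\sinh x}{x}\big) - \frac{x^2}{6}$ for $x \neq 0$ and $f(0) = 0$. Then $$\frac{f(q)}{p} - \frac{f(p)}{q} + \Big(\frac{1}{q} - \frac{1}{p}\Big) f(p-q) \ge 0$$ for all $p, q \in \mathbb{R} \setminus \{0\}$ with $q \le p$. For $p, q \in \mathbb{R}\setminus\{0\}$ with $p \le q$, the reverse inequality ($\le 0$) holds. *)

From Stdlib Require Import Reals.
Open Scope R_scope.

Definition fsh (x : R) : R :=
  if Req_EM_T x 0 then 0 else ln (sinh x / x) - x ^ 2 / 6.

(* Write g(x) = x f(x).  Clearing denominators, the expression equals
   (g(q) + g(p - q) - g(p)) / (p q).  On (0, +oo) one has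
   f'(x) = - h(x) / (3 x sinh x) with h(x) = (3 + x^2) sinh x - 3 x cosh x,
   and h >= 0 on [0, +oo) since h(0) = 0 and h'(x) = x (x cosh x - sinh x) >= 0.
   So f is nonincreasing on (0, +oo), which makes g subadditive on [0, +oo);
   as f is even, g is odd, and subadditivity applied to the two nonnegative
   numbers among |q|, |p - q|, |p| summing to the third settles each sign
   pattern of p, q.  The case p <= q follows from (p, q) |-> (-p, -q). *)

From Stdlib Require Import Reals Lra.
From Coquelicot Require Import Coquelicot.
Open Scope R_scope.

Lemma le_of_is_derive_nonneg (f df : R -> R) (a b : R) :
  (forall x, a <= x <= b -> is_derive f x (df x)) ->
  (forall x, a <= x <= b -> 0 <= df x) -> a <= b -> f a <= f b.
Proof.
  intros Hder Hpos Hab.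
  destruct (MVT_gen f a b df) as [c [Hc Hmvt]].
  - intros x Hx; rewrite Rmin_left, Rmax_right in Hx by lra; apply Hder; lra.
  - intros x Hx; rewrite Rmin_left, Rmax_right in Hx by lra.
    apply continuity_pt_filterlim, (ex_derive_continuous f).
    exists (df x); apply Hder; lra.
  - rewrite Rmin_left, Rmax_right in Hc by lra.
    assert (0 <= df c) by (apply Hpos; lra).
    nra.
Qed.

Lemma sinh_pos x : 0 < x -> 0 < sinh x.
Proof. intros Hx; rewrite <- sinh_0; now apply sinh_lt. Qed.

Lemma sinh_ge0 x : 0 <= x -> 0 <= sinh x.
Proof.
  intros [Hx | <-]; [now apply Rlt_le, sinh_pos | rewrite sinh_0; lra].
Qed.

Definition cosh_gap (x : R) : R := x * cosh x - sinh x.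

Definition fsh_deriv_num (x : R) : R := (3 + x ^ 2) * sinh x - 3 * x * cosh x.

Lemma is_derive_cosh_gap x : is_derive cosh_gap x (x * sinh x).
Proof. unfold cosh_gap, sinh, cosh; auto_derive; [easy | field]. Qed.

Lemma is_derive_fsh_deriv_num x : is_derive fsh_deriv_num x (x * cosh_gap x).
Proof. unfold fsh_deriv_num, cosh_gap, sinh, cosh; auto_derive; [easy | field]. Qed.

Lemma cosh_gap_ge0 x : 0 <= x -> 0 <= cosh_gap x.
Proof.
  intros Hx.
  replace 0 with (cosh_gap 0) by (unfold cosh_gap; rewrite sinh_0, cosh_0; ring).
  apply (le_of_is_derive_nonneg cosh_gap (fun t => t * sinh t)); auto.
  - intros t _; apply is_derive_cosh_gap.
  - intros t Ht; pose proof (sinh_ge0 t ltac:(lra)); nra.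
Qed.

Lemma fsh_deriv_num_ge0 x : 0 <= x -> 0 <= fsh_deriv_num x.
Proof.
  intros Hx.
  replace 0 with (fsh_deriv_num 0)
    by (unfold fsh_deriv_num; rewrite sinh_0, cosh_0; ring).
  apply (le_of_is_derive_nonneg fsh_deriv_num (fun t => t * cosh_gap t)); auto.
  - intros t _; apply is_derive_fsh_deriv_num.
  - intros t Ht; pose proof (cosh_gap_ge0 t ltac:(lra)); nra.
Qed.

Definition fsh_nz (x : R) : R := ln (sinh x / x) - x ^ 2 / 6.

Lemma fsh_nz_eq x : x <> 0 -> fsh x = fsh_nz x.
Proof. intros Hx; unfold fsh; now destruct (Req_EM_T x 0). Qed.

Lemma is_derive_fsh_nz x :
  0 < x -> is_derive fsh_nz x (- fsh_deriv_num x / (3 * (x * sinh x))).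
Proof.
  intros Hx; pose proof (sinh_pos x Hx) as Hs.
  unfold fsh_nz, fsh_deriv_num; unfold sinh, cosh in *; auto_derive.
  - repeat split; try lra; apply Rdiv_lt_0_compat; lra.
  - field; lra.
Qed.

Lemma fsh_nz_nonincreasing x y : 0 < x -> x <= y -> fsh_nz y <= fsh_nz x.
Proof.
  intros Hx Hxy.
  enough (- fsh_nz x <= - fsh_nz y) by lra.
  apply (le_of_is_derive_nonneg (fun t => - fsh_nz t)
           (fun t => fsh_deriv_num t / (3 * (t * sinh t)))); auto.
  - intros t Ht.
    replace (fsh_deriv_num t / (3 * (t * sinh t)))
      with (- (- fsh_deriv_num t / (3 * (t * sinh t)))) by (unfold Rdiv; ring).
    exact (is_derive_opp fsh_nz t _ (is_derive_fsh_nz t ltac:(lra))).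
  - intros t Ht; pose proof (sinh_pos t ltac:(lra)).
    apply Rdiv_le_0_compat; [apply fsh_deriv_num_ge0 | nra]; lra.
Qed.

Lemma fsh_opp x : fsh (- x) = fsh x.
Proof.
  destruct (Req_dec x 0) as [-> | Hx]; [now rewrite Ropp_0 |].
  rewrite !fsh_nz_eq by lra; unfold fsh_nz, sinh.
  rewrite Ropp_involutive; f_equal; [f_equal; field | field]; lra.
Qed.

Lemma mul_fsh_subadditive a b :
  0 <= a -> 0 <= b -> (a + b) * fsh (a + b) <= a * fsh a + b * fsh b.
Proof.
  intros [Ha | <-] [Hb | <-]; rewrite ?Rplus_0_l, ?Rplus_0_r; try lra.
  rewrite !fsh_nz_eq by lra.
  pose proof (fsh_nz_nonincreasing a (a + b) Ha ltac:(lra)).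
  pose proof (fsh_nz_nonincreasing b (a + b) Hb ltac:(lra)).
  nra.
Qed.

Definition fsh_comb (p q : R) : R :=
  fsh q / p - fsh p / q + (1 / q - 1 / p) * fsh (p - q).

Lemma fsh_comb_num_sign p q : p <> 0 -> q <> 0 -> q <= p ->
  0 <= (q * fsh q + (p - q) * fsh (p - q) - p * fsh p) * (p * q).
Proof.
  intros Hp Hq Hqp.
  destruct (Rlt_or_le 0 q) as [Hq0 | Hq0]; [| destruct (Rlt_or_le 0 p) as [Hp0 | Hp0]].
  - pose proof (mul_fsh_subadditive q (p - q) ltac:(lra) ltac:(lra)) as Hsub.
    replace (q + (p - q)) with p in Hsub by ring.
    apply Rmult_le_pos; nra.
  - pose proof (mul_fsh_subadditive p (- q) ltac:(lra) ltac:(lra)) as Hsub.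
    replace (p + - q) with (p - q) in Hsub by ring.
    rewrite fsh_opp in Hsub.
    assert (p * q < 0) by nra.
    nra.
  - pose proof (mul_fsh_subadditive (- p) (p - q) ltac:(lra) ltac:(lra)) as Hsub.
    replace (- p + (p - q)) with (- q) in Hsub by ring.
    rewrite !fsh_opp in Hsub.
    assert (0 < p * q) by nra.
    nra.
Qed.

Lemma fsh_comb_ge0 p q : p <> 0 -> q <> 0 -> q <= p -> 0 <= fsh_comb p q.
Proof.
  intros Hp Hq Hqp.
  replace (fsh_comb p q)
    with ((q * fsh q + (p - q) * fsh (p - q) - p * fsh p) * (p * q) / (p * q) ^ 2)
    by (unfold fsh_comb; field; lra).
  apply Rdiv_le_0_compat; [now apply fsh_comb_num_sign |].
  apply pow2_gt_0, Rmult_integral_contrapositive; lra.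
Qed.

Lemma fsh_comb_opp p q : p <> 0 -> q <> 0 -> fsh_comb (- p) (- q) = - fsh_comb p q.
Proof.
  intros Hp Hq; unfold fsh_comb.
  replace (- p - - q) with (- (p - q)) by ring.
  rewrite !fsh_opp; field; lra.
Qed.

Theorem mainTheorem3 :
  (forall p q : R, p <> 0 -> q <> 0 -> q <= p ->
     fsh q / p - fsh p / q + (1 / q - 1 / p) * fsh (p - q) >= 0) /\
  (forall p q : R, p <> 0 -> q <> 0 -> p <= q ->
     fsh q / p - fsh p / q + (1 / q - 1 / p) * fsh (p - q) <= 0).
Proof.
  split; intros p q Hp Hq Hpq.
  - apply Rle_ge, fsh_comb_ge0; assumption.
  - change (fsh_comb p q <= 0).
    pose proof (fsh_comb_ge0 (- p) (- q) ltac:(lra) ltac:(lra) ltac:(lra)) as Hneg.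
    rewrite fsh_comb_opp in Hneg by assumption.
    lra.
Qed.
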